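(* Let $\mathcal{C}$ be a set of node-disjoint chains with node set $V=\{1,\ldots,n\}$ and $T$ a time function for $\mathcal{C}$, and let $\mathcal{P}(\mathcal{G}^{\mathcal{C},T})=\{A\in\mathbb{R}^{n\times n}: A\in\mathcal{Q}(G)\text{ for some }G\in\mathcal{G}^{\mathcal{C},T}\}$. For a set of control nodes $V_C\subseteq V$ with input matrix $B$, the pair $(A,B)$ is controllable for every $A\in\mathcal{P}(\mathcal{G}^{\mathcal{C},T})$ if and only if $V_C$ contains the set of sources of $\mathcal{C}$.
   Context: Graphs are directed, self-loops allowed. $\mathcal{Q}(G)=\{A\in\mathbb{R}^{n\times n}: \text{for } i\neq j,\ A_{ij}\neq0\iff(j,i)\in E(G)\}$. For $V_C=\{j_1,\ldots,j_m\}$, $B=[e_{j_1},\ldots,e_{j_m}]$ with $e_j$ the $j$th column of $I_n$. A chain is a directed path graph with source (start node) and sink (end node); for a non-sink $v$, $v+1$ is its out-neighbor in the chain. For node-disjoint chains $\mathcal{C}=\{C_1,\ldots,C_m\}$, $V=\bigcup_iV(C_i)$, $\gamma=|V|-m+1$, a time function is $T:V\to\{1,\ldots,\gamma\}$ with (1) $T(v)=1$ for every source; (2) distinct non-source nodes get distinct values; (3) $T(v)<T(v+1)$ for non-sink $v$. $T_{\max}(v)=\gamma$ for a sink $v$, else $T_{\max}(v)=T(v+1)-1$. $\mathcal{G}^{\mathcal{C},T}$ is the set of graphs $G$ with $V(G)=V$, $\bigcup_iE(C_i)\subseteq E(G)$, and $(u,v)\notin E(G)$ whenever $(u,v)\notin\bigcup_iE(C_i)$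 and $T_{\max}(u)<T(v)$. *)

From mathcomp Require Import all_boot all_order all_algebra.
From mathcomp Require Import reals.
Set Implicit Arguments. Unset Strict Implicit. Unset Printing Implicit Defensive.
Import Order.TTheory GRing.Theory Num.Theory.
Local Open Scope ring_scope.

(* Nodes are 'I_n (the paper's {1,...,n}).  A chain is represented by the
   nonempty duplicate-free sequence of its nodes, from source to sink.
   A family of chains is a seq of chains. *)

Section Chains.
Variable n : nat.
Implicit Types (C : seq (seq 'I_n)) (u v : 'I_n).

Definition valid_chains C : Prop :=
  [/\ forall c, c \in C -> c != [::],
      uniq (flatten C) &
      forall v, v \in flatten C].

(* (u,v) is an edge of some chain, i.e. v = u+1 *)
Definition chain_edge C u v : bool :=
  has (fun c => (u, v) \in zip c (behead c)) C.

Definition is_source C v : bool := has (fun c => ohead c == Some v) C.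

Definition is_sink C v : bool := has (fun c => ohead (rev c) == Some v) C.

Definition gamma C : nat := (n - size C + 1)%N.

Definition time_function C (T : 'I_n -> nat) : Prop :=
  [/\ forall v, (1 <= T v <= gamma C)%N,
      forall v, is_source C v -> T v = 1%N,
      forall u v, ~~ is_source C u -> ~~ is_source C v -> u != v -> T u != T v &
      forall u v, chain_edge C u v -> (T u < T v)%N].

Definition Tmax C (T : 'I_n -> nat) v : nat :=
  match [pick w | chain_edge C v w] with
  | Some w => (T w - 1)%N
  | None => gamma C
  end.

(* directed graphs on V (self-loops allowed) as edge relations;
   E u v means (u,v) \in E(G) *)
Definition in_graph_class C (T : 'I_n -> nat) (E : rel 'I_n) : Prop :=
  (forall u v, chain_edge C u v -> E u v) /\
  (forall u v, ~~ chain_edge C u v -> (Tmax C T u < T v)%N -> ~~ E u v).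

End Chains.

Definition in_Q (R : numDomainType) (n : nat) (E : rel 'I_n) (A : 'M[R]_n) : Prop :=
  forall i j : 'I_n, i != j -> (A i j != 0) = E j i.

Definition in_P (R : numDomainType) (n : nat) (C : seq (seq 'I_n))
  (T : 'I_n -> nat) (A : 'M[R]_n) : Prop :=
  exists E : rel 'I_n, in_graph_class C T E /\ in_Q E A.

(* input matrix B = [e_{j_1}, ..., e_{j_m}], V_C = {j_1 < ... < j_m} *)
Definition input_mx (R : fieldType) (n : nat) (VC : {set 'I_n}) :
  'M[R]_(n, #|VC|) :=
  \matrix_(i < n, k < #|VC|) ((i == enum_val k)%:R).

Definition kalman_mx (R : fieldType) (n k : nat) (A : 'M[R]_n)
  (B : 'M[R]_(n, k)) : 'M[R]_(n, \sum_(i < n) k) :=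
  mxrow (q_ := fun _ : 'I_n => k) (fun i : 'I_n => A ^+ i *m B).

Definition controllable (R : fieldType) (n k : nat) (A : 'M[R]_n)
  (B : 'M[R]_(n, k)) : Prop :=
  \rank (kalman_mx A B) = n.

(* Necessity: if a source s is not a control node, the adjacency matrix of the
   chains itself lies in P, and the unit row vector e_s is annihilated by B and,
   since a source has no in-neighbour, also by A; so [B, AB, ..., A^(n-1) B]
   has a nontrivial left kernel.
   Sufficiency: let z A^k B = 0 for all k < n and y_k = z A^k.  By induction on
   T(v), y_k(v) = 0 whenever k + T(v) <= n.  Sources have T = 1 and are control
   nodes.  A non-source v has a chain predecessor u, and
   0 = y_(k+1)(u) = sum_i y_k(i) A_iu.  Any i <> v with A_iu <> 0 is an
   out-neighbour of u other than its chain successor, so the time-function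
   constraint forces T(i) <= T_max(u) = T(v) - 1; as A_vu <> 0 this leaves
   y_k(v) = 0.  Taking k = 0 and using T(v) <= gamma <= n gives z = 0. *)

From mathcomp Require Import all_boot all_order all_algebra.
From mathcomp Require Import reals zify.
Import GRing.Theory.
Set Implicit Arguments. Unset Strict Implicit. Unset Printing Implicit Defensive.

Section ConsecutivePairs.
Variable T : eqType.
Implicit Types (s : seq T) (u v w : T).

Lemma mem_zip_behead s u v :
  (u, v) \in zip s (behead s) -> (u \in s) && (v \in behead s).
Proof.
case: s => [|x s] //=; elim: s x => [|y s IH] x //=.
rewrite in_cons => /orP[/eqP[-> ->]|/IH/andP[Hu Hv]]; first by rewrite eqxx mem_head.
by rewrite Hu orbT in_cons Hv orbT.
Qed.

Lemma zip_behead_succ_uniq s u v w : uniq s ->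
  (u, v) \in zip s (behead s) -> (u, w) \in zip s (behead s) -> v = w.
Proof.
case: s => [|x s] //=; elim: s x => [|y s IH] x //= /andP[xNs Us].
rewrite !in_cons => /orP[/eqP[-> ->]|uv] /orP[/eqP[]|uw].
- by move->.
- by case/andP: (mem_zip_behead uw); rewrite (negPf xNs).
- by move=> ux _; case/andP: (mem_zip_behead uv); rewrite ux (negPf xNs).
- exact: IH Us uv uw.
Qed.

Lemma zip_behead_pred s v : v \in behead s -> exists u, (u, v) \in zip s (behead s).
Proof.
case: s => [|x s] //=; elim: s x => [|y s IH] x //=.
rewrite in_cons => /orP[/eqP->|/(IH y)[u uv]]; first by exists x; rewrite mem_head.
by exists u; rewrite in_cons uv orbT.
Qed.

Lemma uniq_flatten_mem_eq (cs : seq (seq T)) c c' v : uniq (flatten cs) ->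
  c \in cs -> c' \in cs -> v \in c -> v \in c' -> c = c'.
Proof.
elim: cs => [|c0 cs IH] //= /[!cat_uniq] /and3P[_ disj Ucs].
have inC v' c1 : c1 \in cs -> v' \in c1 -> v' \in flatten cs.
  by move=> *; apply/flattenP; exists c1.
rewrite !in_cons => /orP[/eqP->|Hc] /orP[/eqP->|Hc'] // vc vc'.
- by case/hasP: disj; exists v; [apply: inC vc'|].
- by case/hasP: disj; exists v; [apply: inC vc|].
- exact: IH.
Qed.

Lemma uniq_flatten_mem (cs : seq (seq T)) c : uniq (flatten cs) -> c \in cs -> uniq c.
Proof.
elim: cs => [|c0 cs IH] //= /[!cat_uniq] /and3P[Uc0 _ Ucs].
by rewrite in_cons => /orP[/eqP->|]; last exact: IH.
Qed.

End ConsecutivePairs.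

Section ValidChains.
Variables (n : nat) (C : seq (seq 'I_n)).
Hypothesis HC : valid_chains C.
Implicit Types (u v w : 'I_n).

Lemma chain_edge_succ_uniq u v w : chain_edge C u v -> chain_edge C u w -> v = w.
Proof.
case: HC => _ UC _ /hasP[c Hc uv] /hasP[c' Hc' uw].
have [uc _] := andP (mem_zip_behead uv); have [uc' _] := andP (mem_zip_behead uw).
rewrite -(uniq_flatten_mem_eq UC Hc Hc' uc uc') in uw.
exact: zip_behead_succ_uniq (uniq_flatten_mem UC Hc) uv uw.
Qed.

Lemma source_no_chain_edge u v : is_source C v -> ~~ chain_edge C u v.
Proof.
case: HC => _ UC _ /hasP[[|x c] //= Hc /eqP[xv]].
apply/hasP => -[[|y c'] //= Hc' uv]; have /andP[_ vc'] := mem_zip_behead uv.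
have vyc' : v \in y :: c' by rewrite in_cons vc' orbT.
have vxc : v \in x :: c by rewrite xv mem_head.
have [_ c'c] := uniq_flatten_mem_eq UC Hc' Hc vyc' vxc.
by have /andP[] := uniq_flatten_mem UC Hc; rewrite xv -c'c vc'.
Qed.

Lemma chain_edge_pred v : ~~ is_source C v -> exists u, chain_edge C u v.
Proof.
case: HC => nonempty _ covers vNsrc; have /flattenP[[|x c] Hc vc] := covers v.
  by have := nonempty _ Hc.
move: vc; rewrite in_cons => /orP[/eqP vx|vc].
  by case/hasP: vNsrc; exists (x :: c); rewrite //= vx.
have [u uv] := zip_behead_pred (s := x :: c) vc.
by exists u; apply/hasP; exists (x :: c).
Qed.

Lemma Tmax_chain_edge (T : 'I_n -> nat) u v :
  chain_edge C u v -> Tmax C T u = (T v - 1)%N.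
Proof.
move=> uv; rewrite /Tmax; case: pickP => [w uw|noSucc].
  by rewrite (chain_edge_succ_uniq uw uv).
by have := noSucc v; rewrite uv.
Qed.

Lemma gamma_leq : (0 < n)%N -> (gamma C <= n)%N.
Proof.
case: HC => _ _ covers n_gt0; have /flattenP[c Hc _] := covers (Ordinal n_gt0).
have : (0 < size C)%N by case: (C) Hc.
rewrite /gamma; lia.
Qed.

End ValidChains.

Local Open Scope ring_scope.

Lemma controllableP (F : fieldType) (n k : nat) (A : 'M[F]_n) (B : 'M[F]_(n, k)) :
  controllable A B <->
  (forall z : 'rV[F]_n, (forall i : 'I_n, z *m (A ^+ i *m B) = 0) -> z = 0).
Proof.
have kalmanE (z : 'rV[F]_n) :
    (z *m kalman_mx A B == 0) = [forall i : 'I_n, z *m (A ^+ i *m B) == 0].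
  rewrite /kalman_mx mul_mxrow -(mxrow0 (q_ := fun _ : 'I_n => k)).
  apply/eqP/forallP => [/eq_mxrowP z0 i|z0]; first exact/eqP/z0.
  by apply/eq_mxrowP => i; apply/eqP.
have kerE : controllable A B <-> kermx (kalman_mx A B) = 0.
  rewrite /controllable; split=> [/eqP rk|ker0]; first by apply/eqP; rewrite kermx_eq0.
  by apply/eqP; rewrite -[_ == n]/(row_free _) -kermx_eq0 ker0.
rewrite kerE; split.
  move=> ker0 z zA; apply/eqP; rewrite -submx0 -ker0; apply/sub_kermxP/eqP.
  by rewrite kalmanE; apply/forallP => i; apply/eqP.
move=> inj; apply/row_matrixP => i; rewrite row0; apply: inj => j.
have /sub_kermxP/eqP := row_sub i (kermx (kalman_mx A B)).
by rewrite kalmanE => /forallP/(_ j)/eqP.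
Qed.

Lemma mul_input_mx_eq0 (F : fieldType) (n : nat) (VC : {set 'I_n}) (y : 'rV[F]_n) :
  y *m input_mx F VC = 0 <-> {in VC, forall v, y 0 v = 0}.
Proof.
have yB j : (y *m input_mx F VC) 0 j = y 0 (enum_val j).
  rewrite mxE (bigD1 (enum_val j)) //= big1 ?addr0 => [|i /negPf iNj].
    by rewrite mxE eqxx mulr1.
  by rewrite mxE iNj mulr0.
split=> [y0 v vVC | yVC]; last by apply/rowP => j; rewrite yB mxE yVC ?enum_valP.
by rewrite -(enum_rankK_in vVC vVC) -yB y0 mxE.
Qed.

Definition chain_mx (R : numDomainType) (n : nat) (C : seq (seq 'I_n)) : 'M[R]_n :=
  \matrix_(i, j) (chain_edge C j i)%:R.

Lemma chain_mx_in_P (R : numDomainType) (n : nat) (C : seq (seq 'I_n)) (T : 'I_n -> nat) :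
  in_P C T (chain_mx R C).
Proof.
exists (chain_edge C); split; first by split=> // u v /negPf->.
by move=> i j _; rewrite mxE; case: chain_edge; rewrite ?oner_neq0 ?eqxx.
Qed.

Lemma chain_mx_uncontrollable (R : numFieldType) (n : nat) (C : seq (seq 'I_n))
    (VC : {set 'I_n}) (s : 'I_n) :
  valid_chains C -> is_source C s -> s \notin VC ->
  ~ controllable (chain_mx R C) (input_mx R VC).
Proof.
move=> HC src sNVC /controllableP ctrl.
have es_row_s : delta_mx 0 s *m chain_mx R C = 0 :> 'rV_n.
  by apply/rowP => j; rewrite -rowE !mxE (negPf (source_no_chain_edge HC j src)).
suff /rowP/(_ s) : delta_mx 0 s = 0 :> 'rV[R]_n by rewrite !mxE !eqxx; apply/eqP/oner_neq0.
apply: ctrl => i; rewrite mulmxA; case: (i : nat) => [|k].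
  rewrite expr0 mulmx1; apply/mul_input_mx_eq0 => v vVC.
  by rewrite mxE eqxx; case: eqP vVC sNVC => // -> ->.
by rewrite exprS mulmxA es_row_s !mul0mx.
Qed.

Section Sufficiency.
Variables (R : numFieldType) (n : nat) (C : seq (seq 'I_n)) (T : 'I_n -> nat).
Variables (E : rel 'I_n) (A : 'M[R]_n).
Hypotheses (HC : valid_chains C) (HT : time_function C T).
Hypotheses (HE : in_graph_class C T E) (HA : in_Q E A).

Lemma chain_succ_entry_eq0 (y : 'rV[R]_n) u v : chain_edge C u v ->
  (forall i, (T i < T v)%N -> y 0 i = 0) -> (y *m A) 0 u = 0 -> y 0 v = 0.
Proof.
case: HT HE => _ _ _ Tmono [chainE farNE] uv y_early.
have Tuv := Tmono _ _ uv; have vNu : v != u by apply: contraTneq Tuv => ->; rewrite ltnn.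
have early i : i != v -> y 0 i * A i u = 0.
  move=> iNv; case: (eqVneq i u) => [->|iNu]; first by rewrite y_early ?mul0r.
  have [->|Aiu] := eqVneq (A i u) 0; first by rewrite mulr0.
  have Eui : E u i by rewrite -(HA iNu).
  have uNi : ~~ chain_edge C u i.
    by apply: contra iNv => ui; rewrite (chain_edge_succ_uniq HC ui uv).
  have : ~~ (Tmax C T u < T i)%N by apply: contraL Eui; apply: farNE.
  by rewrite (Tmax_chain_edge HC T uv) -leqNgt => Ti; rewrite y_early ?mul0r //; lia.
have Avu : A v u != 0 by rewrite (HA vNu) chainE.
rewrite mxE (bigD1 v) //= big1 ?addr0 => [|i /early //].
by move/eqP; rewrite mulf_eq0 (negPf Avu) orbF => /eqP.
Qed.

Lemma left_kalman_kernel_eq0 (VC : {set 'I_n}) (z : 'rV[R]_n) :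
  (forall v, is_source C v -> v \in VC) ->
  (forall i : 'I_n, z *m (A ^+ i *m input_mx R VC) = 0) -> z = 0.
Proof.
case: HT => T_range T_src _ Tmono srcVC zAB.
have zA_VC k v : (k < n)%N -> v \in VC -> (z *m A ^+ k) 0 v = 0.
  by move=> lt_kn; have := zAB (Ordinal lt_kn); rewrite mulmxA => /mul_input_mx_eq0; apply.
have zA_eq0 t v k : (T v <= t)%N -> (k + T v <= n)%N -> (z *m A ^+ k) 0 v = 0.
  elim: t v k => [|t IH] v k Tvt kTv; first by have := T_range v; lia.
  have [src|/(chain_edge_pred HC)[u uv]] := boolP (is_source C v).
    by apply: zA_VC; [move: kTv; rewrite T_src //; lia | apply: srcVC].
  have Tuv := Tmono _ _ uv.
  apply: (chain_succ_entry_eq0 uv) => [i Ti|]; first by apply: IH; lia.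
  by rewrite -mulmxA mulmxE -exprSr; apply: IH; lia.
apply/rowP => v; rewrite mxE.
have le_Tv_n : (T v <= n)%N.
  have := T_range v; have := gamma_leq HC (leq_ltn_trans (leq0n v) (ltn_ord v)); lia.
by have := zA_eq0 _ v 0%N (leqnn _) le_Tv_n; rewrite expr0 mulmx1.
Qed.

End Sufficiency.

Theorem theorem4 (R : realType) (n : nat) (C : seq (seq 'I_n))
  (T : 'I_n -> nat) (VC : {set 'I_n}) :
  valid_chains C -> time_function C T ->
  ((forall A : 'M[R]_n, in_P C T A -> controllable A (input_mx R VC)) <->
   (forall v : 'I_n, is_source C v -> v \in VC)).
Proof.
move=> HC HT; split=> [ctrl s src | srcVC A [E [HE HA]]].
  apply/idPn => sNVC.
  exact: chain_mx_uncontrollable HC src sNVC (ctrl _ (chain_mx_in_P _ _ T)).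
by apply/controllableP => z; apply: left_kalman_kernel_eq0 HC HT HE HA VC z srcVC.
Qed.
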